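(* Let $A\in\mathbb{R}^{n\times m}$ with $n<m$ have nonzero columns $\alpha_1,\dots,\alpha_m$, let $c_{ij}=\langle\alpha_i,\alpha_j\rangle$, $\nu(i)=\max_{j\neq i}\frac{|c_{ij}|}{c_{ii}}$, and let $s$ be an integer with $1\le s\le m$. Let $k_{max}=\max_{\mathcal{T}\subseteq[m],|\mathcal{T}|=s}\Lambda_{max}(A_{\mathcal{T}}^TA_{\mathcal{T}})$ and $k_{min}=\min_{\mathcal{T}\subseteq[m],|\mathcal{T}|=s}\Lambda_{min}(A_{\mathcal{T}}^TA_{\mathcal{T}})$. Then $$\frac{k_{min}}{k_{max}}\ge\min_{h\neq l}\frac{c_{hh}}{c_{ll}}-2(s-1)\max_{i}\nu(i).$$
   Context: $[m]=\{1,\dots,m\}$. For $\mathcal{T}\subseteq[m]$, $A_{\mathcal{T}}$ is the submatrix of $A$ formed by the columns indexed by $\mathcal{T}$. $\Lambda_{max}(B)$, $\Lambda_{min}(B)$ denote the largest and smallest eigenvalues of a symmetric matrix $B$. The minimum is over $h,l\in[m]$ with $h\neq l$, and the maxima in $\nu(i)$ are over $j\in[m]\setminus\{i\}$. *)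

From mathcomp Require Import all_boot all_order all_algebra.
From mathcomp Require Import boolp classical_sets reals.
Set Implicit Arguments. Unset Strict Implicit. Unset Printing Implicit Defensive.
Import Order.TTheory GRing.Theory Num.Theory.
Local Open Scope ring_scope.
Local Open Scope classical_set_scope.

Section Defs.
Variable R : realType.

(* For a real symmetric matrix this set is finite and
   nonempty, so these are the usual max / min eigenvalues. *)
Definition lambda_max (k : nat) (B : 'M[R]_k) : R := sup [set a : R | eigenvalue B a].
Definition lambda_min (k : nat) (B : 'M[R]_k) : R := inf [set a : R | eigenvalue B a].

Definition colsubset (n m : nat) (A : 'M[R]_(n, m)) (T : {set 'I_m}) : 'M[R]_(n, #|T|) :=
  colsub (fun j : 'I_#|T| => enum_val j) A.

Definition cc (n m : nat) (A : 'M[R]_(n, m)) (i j : 'I_m) : R := (A^T *m A) i j.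

Definition nu (n m : nat) (A : 'M[R]_(n, m)) (i : 'I_m) : R :=
  sup [set `|cc A i j| / cc A i i | j in [set j : 'I_m | j != i]].

Definition kmax (n m : nat) (A : 'M[R]_(n, m)) (s : nat) : R :=
  sup [set lambda_max ((colsubset A T)^T *m colsubset A T)
       | T in [set T : {set 'I_m} | #|T| = s]].

Definition kmin (n m : nat) (A : 'M[R]_(n, m)) (s : nat) : R :=
  inf [set lambda_min ((colsubset A T)^T *m colsubset A T)
       | T in [set T : {set 'I_m} | #|T| = s]].

End Defs.

From mathcomp Require Import all_boot all_order all_algebra.
From mathcomp Require Import boolp classical_sets reals.
From mathcomp Require Import complex ring lra.
Set Implicit Arguments. Unset Strict Implicit. Unset Printing Implicit Defensive.
Import Order.TTheory GRing.Theory Num.Theory.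
Local Open Scope ring_scope.

(* Gershgorin's theorem, applied to the columns of the Gram matrix A_T^T A_T with
   |T| = s, puts every eigenvalue within (s - 1) nu c_ee of some diagonal entry c_ee,
   where nu = max_i nu(i); Gram eigenvalues are moreover nonnegative.  Hence
   k_min >= max(0, c_min (1 - (s - 1) nu)) and k_max <= c_max (1 + (s - 1) nu), and
   elementary algebra turns these two bounds into the claimed bound on k_min / k_max.
   The sup and inf defining Lambda_max, Lambda_min are meaningful because a real
   symmetric matrix has a real eigenvalue. *)

Section RowDot.
Variable R : realFieldType.

Lemma mulmx_trmx_ge0 k (u : 'rV[R]_k) : 0 <= (u *m u^T) 0 0.
Proof. by rewrite mxE; apply: sumr_ge0 => i _; rewrite mxE -expr2 sqr_ge0. Qed.

Lemma mulmx_trmx_eq0 k (u : 'rV[R]_k) : ((u *m u^T) 0 0 == 0) = (u == 0).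
Proof.
apply/idP/eqP => [|->]; last by rewrite mul0mx mxE.
rewrite mxE psumr_eq0 => [/allP u0|i _]; last by rewrite mxE -expr2 sqr_ge0.
apply/rowP => i; have /implyP := u0 i (mem_index_enum i).
by rewrite !mxE -expr2 sqrf_eq0 => /(_ isT) /eqP.
Qed.

Lemma mulmx_trmx_gt0 k (u : 'rV[R]_k) : u != 0 -> 0 < (u *m u^T) 0 0.
Proof. by move=> u0; rewrite lt_def mulmx_trmx_eq0 u0 mulmx_trmx_ge0. Qed.

Lemma sym_mx_rotation_eq0 k (G : 'M[R]_k) (p q : R) (a b : 'rV[R]_k) :
  G^T = G -> a *m G = p *: a - q *: b -> b *m G = q *: a + p *: b ->
  q * ((a *m a^T) 0 0 + (b *m b^T) 0 0) = 0.
Proof.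
move=> GT aG bG.
have ab : (a *m b^T) 0 0 = (b *m a^T) 0 0.
  by rewrite !mxE; apply: eq_bigr => i _; rewrite !mxE mulrC.
have : (a *m G *m b^T) 0 0 = (b *m G *m a^T) 0 0.
  transitivity ((a *m G *m b^T)^T 0 0); first by rewrite [RHS]mxE.
  by rewrite !trmx_mul trmxK GT mulmxA.
rewrite aG bG !mulmxDl !mulNmx -!scalemxAl.
move: ab; move: (a *m b^T) (b *m a^T) (a *m a^T) (b *m b^T) => ab ba aa bb ab_ba.
rewrite !mxE ab_ba; lra.
Qed.

End RowDot.

Section RealEigenvalue.
Variable R : rcfType.

Lemma map_Re_mulmx k (v : 'rV[R[i]]_k) (G : 'M[R]_k) :
  map_mx (@complex.Re R) (v *m map_mx (real_complex R) G) =
    map_mx (@complex.Re R) v *m G.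
Proof.
apply/rowP => j; rewrite !mxE (raddf_sum (@complex.Re R : Rcomplex R -> R)).
by apply: eq_bigr => i _; rewrite !mxE; case: (v 0 i) => x y /=; rewrite mulr0 subr0.
Qed.

Lemma map_Im_mulmx k (v : 'rV[R[i]]_k) (G : 'M[R]_k) :
  map_mx (@complex.Im R) (v *m map_mx (real_complex R) G) =
    map_mx (@complex.Im R) v *m G.
Proof.
apply/rowP => j; rewrite !mxE (raddf_sum (@complex.Im R : Rcomplex R -> R)).
by apply: eq_bigr => i _; rewrite !mxE; case: (v 0 i) => x y /=; rewrite mulr0 add0r.
Qed.

Lemma map_Re_scale k (z : R[i]) (v : 'rV[R[i]]_k) :
  map_mx (@complex.Re R) (z *: v) =
    complex.Re z *: map_mx (@complex.Re R) v - complex.Im z *: map_mx (@complex.Im R) v.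
Proof. by apply/rowP => j; rewrite !mxE; case: z; case: (v 0 j). Qed.

Lemma map_Im_scale k (z : R[i]) (v : 'rV[R[i]]_k) :
  map_mx (@complex.Im R) (z *: v) =
    complex.Im z *: map_mx (@complex.Re R) v + complex.Re z *: map_mx (@complex.Im R) v.
Proof.
by apply/rowP => j; rewrite !mxE; case: z => p q; case: (v 0 j) => x y /=; rewrite addrC.
Qed.

(* A complex eigenvalue z, with eigenvector a + i b, of a real symmetric matrix is
   real by [sym_mx_rotation_eq0]; then a or b is a real eigenvector. *)
Lemma sym_mx_has_eigenvalue k (G : 'M[R]_k) :
  (0 < k)%N -> G^T = G -> exists a, eigenvalue G a.
Proof.
move=> k_gt0 GT; pose Gc := map_mx (real_complex R) G.
have [z] : exists z, root (char_poly Gc) z.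
  by apply/closed_rootP; rewrite size_char_poly; case: k k_gt0 {G GT Gc}.
rewrite -eigenvalue_root_char => /eigenvalueP [v vG v_neq0].
pose a := map_mx (@complex.Re R) v; pose b := map_mx (@complex.Im R) v.
have aG : a *m G = complex.Re z *: a - complex.Im z *: b.
  by rewrite -map_Re_mulmx vG map_Re_scale.
have bG : b *m G = complex.Im z *: a + complex.Re z *: b.
  by rewrite -map_Im_mulmx vG map_Im_scale.
have ab_gt0 : 0 < (a *m a^T) 0 0 + (b *m b^T) 0 0.
  rewrite lt_def paddr_eq0 ?mulmx_trmx_ge0 // !mulmx_trmx_eq0 addr_ge0 ?mulmx_trmx_ge0 //.
  rewrite andbT; apply: contra v_neq0 => /andP [/eqP a0 /eqP b0].
  apply/eqP/rowP => j; move/rowP: a0 => /(_ j); move/rowP: b0 => /(_ j).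
  by rewrite !mxE; case: (v 0 j) => x y /= -> ->.
have Imz0 : complex.Im z = 0.
  apply/eqP; move: (sym_mx_rotation_eq0 GT aG bG) => /eqP.
  by rewrite mulf_eq0 (gt_eqF ab_gt0) orbF.
move: aG bG; rewrite Imz0 !scale0r subr0 add0r => aG bG.
exists (complex.Re z); apply/eigenvalueP.
have [a0|a_neq0] := eqVneq a 0; last by exists a.
exists b => //; apply: contraTneq ab_gt0 => b0.
by rewrite a0 b0 !mul0mx mxE addr0 ltxx.
Qed.

End RealEigenvalue.

Section Gershgorin.
Variable R : realFieldType.

Lemma eigenvalue_gershgorin_col k (G : 'M[R]_k) a : eigenvalue G a ->
  exists p, `|a - G p p| <= \sum_(i | i != p) `|G i p|.
Proof.
move=> /eigenvalueP [w wG w_neq0].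
have [i0 _] : exists i0 : 'I_k, true.
  by case: k G w wG w_neq0 => [|k] G w _; [rewrite [w]thinmx0 eqxx | exists ord0].
have [p _ w_max] := @arg_maxP _ _ _ i0 xpredT (fun j => `|w 0 j|) isT.
exists p.
have wp_gt0 : 0 < `|w 0 p|.
  rewrite lt_def normr_ge0 andbT; apply: contra w_neq0 => /eqP wp0.
  apply/eqP/rowP => j.
  by rewrite mxE; apply/eqP; rewrite -normr_le0 -wp0; apply: w_max.
have wG_p : (a - G p p) * w 0 p = \sum_(i | i != p) w 0 i * G i p.
  move/rowP: wG => /(_ p); rewrite !mxE (bigD1 p) //= => wGp; rewrite mulrBl -wGp; ring.
rewrite -(ler_pM2r wp_gt0) -normrM wG_p (le_trans (ler_norm_sum _ _ _)) //.
rewrite mulr_suml; apply: ler_sum => i _.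
by rewrite normrM mulrC ler_wpM2l //; apply: w_max.
Qed.

Lemma gram_eigenvalue_ge0 n k (B : 'M[R]_(n, k)) a : eigenvalue (B^T *m B) a -> 0 <= a.
Proof.
move=> /eigenvalueP [w wG w_neq0].
have : (w *m B^T *m (w *m B^T)^T) 0 0 = a * (w *m w^T) 0 0.
  by rewrite trmx_mul trmxK !mulmxA -(mulmxA w) wG -scalemxAl mxE.
by move/(congr1 (fun r => 0 <= r)); rewrite mulmx_trmx_ge0 pmulr_lge0 ?mulmx_trmx_gt0.
Qed.

End Gershgorin.

Section SupInf.
Variable R : realType.
Local Open Scope classical_set_scope.

Lemma has_ubound_fin_image (T : finType) (f : T -> R) (P : set T) : has_ubound (f @` P).
Proof.
exists (\sum_t `|f t|) => _ [t _ <-].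
by rewrite (le_trans (ler_norm _)) // (bigD1 t) //= lerDl sumr_ge0.
Qed.

Lemma has_lbound_fin_image (T : finType) (f : T -> R) (P : set T) : has_lbound (f @` P).
Proof.
exists (- \sum_t `|f t|) => _ [t _ <-].
by rewrite lerNl (le_trans (ler_norm _)) // normrN (bigD1 t) //= lerDl sumr_ge0.
Qed.

Lemma inf_le_sup_image (I : Type) (P : set I) (f g : I -> R) (lo hi : R) :
  P !=set0 -> (forall i, P i -> [/\ lo <= f i, f i <= g i & g i <= hi]) ->
  [/\ lo <= inf (f @` P), inf (f @` P) <= sup (g @` P) & sup (g @` P) <= hi].
Proof.
move=> [i0 Pi0] bnd; split.
- by apply: lb_le_inf => [|_ [i /bnd [? _ _] <-]]; first exists (f i0), i0.
- have [lo_f fg ghi] := bnd i0 Pi0.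
  apply: le_trans (le_trans fg _).
    by apply: ge_inf; [exists lo => _ [i /bnd [? _ _] <-] | exists i0].
  by apply: ub_le_sup; [exists hi => _ [i /bnd [_ _ ?] <-] | exists i0].
- by apply: ge_sup => [|_ [i /bnd [_ _ ?] <-]]; first exists (g i0), i0.
Qed.

End SupInf.

Section RatioBounds.
Variable R : realFieldType.

Lemma near_diag_bounds (a c cl cu x : R) :
  0 <= a -> 0 <= cl -> cl <= c -> c <= cu -> 0 <= x -> `|a - c| <= x * c ->
  Num.max 0 (cl * (1 - x)) <= a <= cu * (1 + x).
Proof.
move=> a_ge0 cl_ge0 cl_c c_cu x_ge0; rewrite ler_norml => /andP [a_lo a_hi].
rewrite ge_max a_ge0 /=; apply/andP; split.
  have [x_le1|x_gt1] := lerP x 1.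
    have : 0 <= (c - cl) * (1 - x) by rewrite mulr_ge0 ?subr_ge0.
    nra.
  by apply: le_trans a_ge0; rewrite mulr_ge0_le0 // subr_le0 ltW.
have : 0 <= (cu - c) * (1 + x) by rewrite mulr_ge0 ?subr_ge0 ?addr_ge0.
nra.
Qed.

Lemma ratio_lower_bound (cl cu x k1 k2 : R) :
  0 < cl -> cl <= cu -> 0 <= x ->
  Num.max 0 (cl * (1 - x)) <= k1 -> k1 <= k2 -> k2 <= cu * (1 + x) ->
  cl / cu - 2 * x <= k1 / k2.
Proof.
move=> cl_gt0 cl_cu x_ge0; rewrite ge_max => /andP [k1_ge0 lo_k1] k12 k2_hi.
have cu_gt0 : 0 < cu by apply: lt_le_trans cl_cu.
set rho := cl / cu.
have rho_cu : rho * cu = cl by rewrite /rho divfK // gt_eqF.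
have [rho_le|rho_gt] := lerP (rho - 2 * x) 0.
  by rewrite (le_trans rho_le) // divr_ge0 // (le_trans k1_ge0).
have x_lt1 : 0 < 1 - x.
  have : rho <= 1 by rewrite /rho ler_pdivrMr // mul1r.
  lra.
have k1_gt0 : 0 < k1 by apply: lt_le_trans lo_k1; rewrite mulr_gt0.
rewrite ler_pdivlMr ?(lt_le_trans k1_gt0) //.
have := ler_wpM2l (ltW rho_gt) k2_hi.
have -> : (rho - 2 * x) * (cu * (1 + x)) = (cl - 2 * x * cu) * (1 + x).
  by rewrite -rho_cu; ring.
have : 0 <= x * (cu - cl) by rewrite mulr_ge0 // subr_ge0.
have : 0 <= x * x * cu by rewrite !mulr_ge0 // ltW.
nra.
Qed.

End RatioBounds.

Section Coherence.
Variables (R : realType) (n m : nat) (A : 'M[R]_(n, m)).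
Local Open Scope classical_set_scope.

Definition colgram (T : {set 'I_m}) : 'M[R]_#|T| := (colsubset A T)^T *m colsubset A T.

Definition nu_max : R := sup [set nu A i | i in [set: 'I_m]].

Lemma colgramE T i j : colgram T i j = cc A (enum_val i) (enum_val j).
Proof. by rewrite /cc /colgram /colsubset !mxE; apply: eq_bigr => k _; rewrite !mxE. Qed.

Lemma colgram_sym T : (colgram T)^T = colgram T.
Proof. by rewrite /colgram trmx_mul trmxK. Qed.

Lemma cc_sym i j : cc A i j = cc A j i.
Proof. by rewrite /cc !mxE; apply: eq_bigr => k _; rewrite !mxE mulrC. Qed.

Lemma cc_diagE i : cc A i i = ((col i A)^T *m (col i A)^T^T) 0 0.
Proof. by rewrite trmxK /cc !mxE; apply: eq_bigr => k _; rewrite !mxE. Qed.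

Lemma cc_le_nu i j : j != i -> `|cc A i j| / cc A i i <= nu A i.
Proof. by move=> ji; apply: ub_le_sup; [exact: has_ubound_fin_image | exists j]. Qed.

Lemma nu_le_max i : nu A i <= nu_max.
Proof. by apply: ub_le_sup; [exact: has_ubound_fin_image | exists i]. Qed.

Lemma cc_offdiag_le i j : 0 < cc A i i -> j != i -> `|cc A i j| <= nu_max * cc A i i.
Proof.
by move=> cii_gt0 ji; rewrite -ler_pdivrMr // (le_trans (cc_le_nu ji)) ?nu_le_max.
Qed.

Lemma diag_ratio_inf_le h l :
  (1 < m)%N -> (forall j, cc A h h <= cc A j j) -> (forall j, cc A j j <= cc A l l) ->
  inf [set cc A hl.1 hl.1 / cc A hl.2 hl.2 | hl in [set hl : 'I_m * 'I_m | hl.1 != hl.2]]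
    <= cc A h h / cc A l l.
Proof.
move=> m_gt1 h_min l_max.
have inf_le := ge_inf (has_lbound_fin_image
  (fun hl : 'I_m * 'I_m => cc A hl.1 hl.1 / cc A hl.2 hl.2) [set hl | hl.1 != hl.2]).
have [hl|] := eqVneq h l; last by move=> hl; apply: inf_le; exists (h, l).
have [j jh] : exists j, j != h.
  have [->|] := eqVneq h (Ordinal m_gt1); last by exists (Ordinal m_gt1); rewrite eq_sym.
  by exists (Ordinal (ltnW m_gt1)); apply/eqP => /(congr1 val).
have -> : cc A l l = cc A j j by apply/eqP; rewrite eq_le l_max -hl h_min.
by apply: inf_le; exists (h, j); rewrite //= eq_sym.
Qed.

Lemma nu_max_ge0 : (1 < m)%N -> 0 <= nu_max.
Proof.
move=> m_gt1; pose i := Ordinal (ltnW m_gt1); pose j := Ordinal m_gt1.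
have ji : j != i by apply/eqP => /(congr1 val).
apply: le_trans (le_trans (cc_le_nu ji) (nu_le_max i)).
by rewrite divr_ge0 // cc_diagE mulmx_trmx_ge0.
Qed.

Section ColumnsNonzero.
Hypotheses (n_lt_m : (n < m)%N) (col_neq0 : forall i, col i A != 0).

Lemma rows_gt0 : (0 < n)%N.
Proof.
case: n A col_neq0 n_lt_m => // A' colA' m_gt0.
by move: (colA' (Ordinal m_gt0)); rewrite flatmx0 eqxx.
Qed.

Lemma cols_gt1 : (1 < m)%N.
Proof. exact: leq_ltn_trans rows_gt0 n_lt_m. Qed.

Lemma cc_diag_gt0 i : 0 < cc A i i.
Proof. by rewrite cc_diagE mulmx_trmx_gt0 // -trmx0 (inj_eq trmx_inj) col_neq0. Qed.

Lemma colgram_eigenvalue_near_diag T a : eigenvalue (colgram T) a ->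
  exists e, `|a - cc A e e| <= (#|T| - 1)%N%:R * nu_max * cc A e e.
Proof.
move=> /eigenvalue_gershgorin_col [p]; rewrite colgramE => near_p.
exists (enum_val p); apply: le_trans near_p _.
apply: le_trans (_ : _ <= \sum_(i | i != p) nu_max * cc A (enum_val p) (enum_val p)) _.
  apply: ler_sum => i ip; rewrite colgramE cc_sym cc_offdiag_le ?cc_diag_gt0 //.
  by rewrite (inj_eq enum_val_inj).
by rewrite sumr_const cardC1 card_ord -subn1 -mulrA mulr_natl.
Qed.

Lemma colgram_eigenvalue_bounds T a cl cu :
  0 <= cl -> (forall i, cl <= cc A i i <= cu) -> eigenvalue (colgram T) a ->
  Num.max 0 (cl * (1 - (#|T| - 1)%N%:R * nu_max))
    <= a <= cu * (1 + (#|T| - 1)%N%:R * nu_max).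
Proof.
move=> cl_ge0 diag_range eig_a.
have [e near_e] := colgram_eigenvalue_near_diag eig_a.
have /andP [cl_e e_cu] := diag_range e.
apply: near_diag_bounds cl_ge0 cl_e e_cu _ near_e.
  exact: gram_eigenvalue_ge0 eig_a.
by rewrite mulr_ge0 ?nu_max_ge0 ?cols_gt1.
Qed.

Lemma kmin_kmax_bounds s cl cu :
  (1 <= s <= m)%N -> 0 <= cl -> (forall i, cl <= cc A i i <= cu) ->
  [/\ Num.max 0 (cl * (1 - (s - 1)%N%:R * nu_max)) <= kmin A s,
      kmin A s <= kmax A s & kmax A s <= cu * (1 + (s - 1)%N%:R * nu_max)].
Proof.
move=> /andP [s_gt0 s_le_m] cl_ge0 diag_range.
apply: (inf_le_sup_image (f := fun T => lambda_min (colgram T))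
                         (g := fun T => lambda_max (colgram T))).
  exists (widen_ord s_le_m @: 'I_s); rewrite /= card_imset ?card_ord //.
  by move=> u v /(congr1 val) uv; apply: val_inj.
move=> T /= Ts; have [a eig_a] : exists a, eigenvalue (colgram T) a.
  by apply: sym_mx_has_eigenvalue; rewrite ?Ts ?colgram_sym.
rewrite /lambda_min /lambda_max -[X in inf X]image_id -[X in sup X]image_id -Ts.
apply: inf_le_sup_image => [|b]; first by exists a.
by move/(colgram_eigenvalue_bounds cl_ge0 diag_range)/andP => [-> ->].
Qed.

End ColumnsNonzero.
End Coherence.

Theorem theorem2 (R : realType) (n m : nat) (A : 'M[R]_(n, m)) (s : nat) :
  (n < m)%N ->
  (forall i : 'I_m, col i A != 0) ->
  (1 <= s <= m)%N ->
  kmin A s / kmax A s >=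
    inf [set cc A hl.1 hl.1 / cc A hl.2 hl.2
         | hl in [set hl : 'I_m * 'I_m | hl.1 != hl.2]]
    - 2 * (s - 1)%N%:R * sup [set nu A i | i in [set: 'I_m]].
Proof.
move=> n_lt_m col_neq0 s_range.
have m_gt1 := cols_gt1 n_lt_m col_neq0.
pose i0 := Ordinal (ltnW m_gt1).
have [h _ h_min] := @arg_minP _ _ _ i0 xpredT (fun i => cc A i i) isT.
have [l _ l_max] := @arg_maxP _ _ _ i0 xpredT (fun i => cc A i i) isT.
have cl_gt0 := cc_diag_gt0 col_neq0 h.
have h_le j : cc A h h <= cc A j j := h_min j isT.
have le_l j : cc A j j <= cc A l l := l_max j isT.
have diag_range i : cc A h h <= cc A i i <= cc A l l by rewrite h_le le_l.
have [lo_kmin kmin_kmax kmax_hi] :=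
  kmin_kmax_bounds n_lt_m col_neq0 s_range (ltW cl_gt0) diag_range.
rewrite -/(nu_max A) -mulrA.
apply: le_trans (ratio_lower_bound cl_gt0 _ _ lo_kmin kmin_kmax kmax_hi).
- by rewrite lerD2r diag_ratio_inf_le.
- exact: le_l.
- by rewrite mulr_ge0 ?nu_max_ge0.
Qed.
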